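(* Assume $t_m=1$. Let $y\in\mathbb Z_\beta^+$ have β-expansion $y_ny_{n-1}\cdots y_k0^k\bullet$ with $y_k\ne0$, $k\in\mathbb N$. Then $y-{\rm pred}(y)=T_\beta^{k'}(1)$, where $k'\in\{0,1,\dots,m-1\}$ satisfies $k'\equiv k\pmod m$.
   Context: $\beta>1$ is a simple Parry number with $d_\beta(1)=t_1\cdots t_{m-1}t_m$ ($m\ge2$, $t_1\ge1$, $t_m\ge1$, satisfying the Parry condition). The β-expansion of $x>0$ is the greedy expansion $x=\sum_{i\le k}x_i\beta^i$; we write $x=x_k\cdots x_0\bullet$ when $x_i=0$ for $i<0$, and such $x$ (together with $0$) form $\mathbb Z_\beta^+$, the non-negative β-integers. A finite string $x_k\cdots x_0$ over $\{0,\dots,\lceil\beta\rceil-1\}$ is the β-expansion of a β-integer iff each suffix $x_ix_{i-1}\cdots x_0$ ($i\le k$) is lexicographically strictly smaller than $d_\beta(1)$. $\mathbb Z_\beta=\mathbb Z_\beta^+\cup(-\mathbb Z_\beta^+)$, ${\rm pred}(x)=\max\{y\in\mathbb Z_\beta: y<x\}$. $T_\beta(x)=\beta x\bmod 1$, and $T_\beta^i(1)=\sum_{j=i+1}^m t_j\beta^{i-j}$ for $0\le i\le m-1$. *)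

From Stdlib Require Import Reals Lra ZArith.
Open Scope R_scope.

Definition floorR (x : R) : Z := Int_part x.

Definition Tb (beta x : R) : R := beta * x - IZR (floorR (beta * x)).

Definition Tn (beta : R) (n : nat) (x : R) : R := Nat.iter n (Tb beta) x.

(* i-th digit t_i (i >= 1) of the Renyi expansion d_beta(1) = t_1 t_2 ...:
   t_i = floor(beta * T_beta^{i-1}(1)). *)
Definition renyi_digit (beta : R) (i : nat) : Z :=
  floorR (beta * Tn beta (i - 1) 1).

(* beta is a simple Parry number with d_beta(1) = t_1 ... t_m, t_m >= 1:
   the greedy expansion of 1 stops after exactly m digits. *)
Definition simple_parry_len (beta : R) (m : nat) : Prop :=
  1 < beta /\ (1 <= m)%nat /\ Tn beta m 1 = 0 /\ (1 <= renyi_digit beta m)%Z.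

(* Greedy beta-expansion of x > 0 whose leading position is n
   (i.e. beta^n <= x < beta^(n+1)): the digit at position i <= n is
   x_i = floor(beta * T_beta^{n-i}(x / beta^(n+1))). *)
Definition top_pos (beta x : R) (n : nat) : Prop :=
  beta ^ n <= x < beta ^ (S n).

Definition bdigit (beta x : R) (n i : nat) : Z :=
  floorR (beta * Tn beta (n - i) (x / beta ^ (S n))).

(* x is a non-negative beta-integer: x = 0, or x > 0 has leading position
   n >= 0 and all digits at negative positions vanish, i.e. the remainder
   T_beta^{n+1}(x / beta^(n+1)) is 0. *)
Definition in_Zbeta_plus (beta x : R) : Prop :=
  x = 0 \/ exists n : nat, top_pos beta x n /\ Tn beta (S n) (x / beta ^ (S n)) = 0.

Definition in_Zbeta (beta x : R) : Prop :=
  in_Zbeta_plus beta x \/ in_Zbeta_plus beta (- x).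

Definition is_pred (beta y p : R) : Prop :=
  in_Zbeta beta p /\ p < y /\ forall z, in_Zbeta beta z -> z < y -> z <= p.

(* Dividing by [beta ^ (n+1)] turns the beta-integers below [beta ^ (n+1)]
   into the numbers of [0,1) whose greedy expansion has at most [n+1] digits,
   so pred(y) is the largest such number below [y / beta ^ (n+1)].  It agrees
   with [y] down to the last nonzero digit [y_k], which is lowered by one, and
   the remaining [k] places carry the largest admissible [k]-digit string
   below [1].  Because [t_m = 1], that string is the truncation of
   [(t_1 ... t_(m-1) 0)^omega], and its distance to [1] is
   [T^(k mod m)(1) / beta ^ k]. *)

From Stdlib Require Import Reals Lra Lia ZArith.
Open Scope R_scope.

Lemma floorR_spec r : IZR (floorR r) <= r < IZR (floorR r) + 1.
Proof. unfold floorR. destruct (base_Int_part r). lra. Qed.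

Lemma floorR_unique z r : IZR z <= r < IZR z + 1 -> floorR r = z.
Proof. intros. symmetry. apply Int_part_spec. lra. Qed.

Lemma floorR_le x y : x <= y -> (floorR x <= floorR y)%Z.
Proof.
  intros H. destruct (floorR_spec x), (floorR_spec y).
  assert (floorR x < floorR y + 1)%Z by (apply lt_IZR; rewrite plus_IZR; simpl; lra).
  lia.
Qed.

Lemma floorR_nonneg x : 0 <= x -> (0 <= floorR x)%Z.
Proof.
  intros H. apply (floorR_le 0) in H.
  rewrite (floorR_unique 0 0) in H by (simpl; lra). exact H.
Qed.

Lemma Rdiv_le_compat_pos a b c : 0 < c -> a <= b -> a / c <= b / c.
Proof. intros. apply Rmult_le_compat_r; auto. left. apply Rinv_0_lt_compat; auto. Qed.

Lemma Rdiv_lt_compat_pos a b c : 0 < c -> a < b -> a / c < b / c.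
Proof. intros. apply Rmult_lt_compat_r; auto. apply Rinv_0_lt_compat; auto. Qed.

Lemma Rdiv_range a c : 0 <= a < c -> 0 <= a / c < 1.
Proof.
  intros [a0 ac]. assert (c0 : 0 < c) by lra. split.
  - apply Rmult_le_pos; [lra|]. left. apply Rinv_0_lt_compat. lra.
  - apply (Rmult_lt_reg_l c); auto. replace (c * (a / c)) with a by (field; lra). lra.
Qed.

Lemma Tb_range beta x : 0 <= Tb beta x < 1.
Proof. unfold Tb. destruct (floorR_spec (beta * x)). lra. Qed.

Lemma Tb_decomp beta u : 0 < beta -> u = (IZR (floorR (beta * u)) + Tb beta u) / beta.
Proof. intros. unfold Tb. field. lra. Qed.

Lemma Tb_floor0 beta x : floorR (beta * x) = 0%Z -> Tb beta x = beta * x.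
Proof. intros H. unfold Tb. rewrite H. simpl. ring. Qed.

Lemma Tn_succ_r beta K u : Tn beta (S K) u = Tn beta K (Tb beta u).
Proof. unfold Tn. induction K; simpl; auto. simpl in IHK. rewrite IHK. reflexivity. Qed.

Lemma Tn_add beta a b x : Tn beta (a + b) x = Tn beta a (Tn beta b x).
Proof. unfold Tn. induction a; simpl; auto. rewrite IHa. reflexivity. Qed.

Lemma Tn_zero_digits beta k w :
  (forall t, (t < k)%nat -> floorR (beta * Tn beta t w) = 0%Z) -> Tn beta k w = beta ^ k * w.
Proof.
  induction k; intros H.
  - simpl. ring.
  - change (Tn beta (S k) w) with (Tb beta (Tn beta k w)).
    rewrite Tb_floor0 by auto. rewrite IHk by auto. simpl. ring.
Qed.

Lemma Tn_small beta j x : 1 < beta -> 0 <= x -> beta ^ j * x < 1 -> Tn beta j x = beta ^ j * x.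
Proof.
  intros hb hx. induction j; intros h.
  - simpl. ring.
  - assert (P : 0 < beta ^ j) by (apply pow_lt; lra).
    assert (h' : beta ^ j * x < 1) by (simpl in h; nra).
    change (Tn beta (S j) x) with (Tb beta (Tn beta j x)).
    rewrite IHj by auto.
    rewrite Tb_floor0; [simpl; ring|].
    assert (0 <= beta ^ j * x) by (apply Rmult_le_pos; lra).
    apply floorR_unique. simpl in *. split; nra.
Qed.

Definition at_most_digits (beta : R) (K : nat) (u : R) : Prop :=
  0 <= u < 1 /\ Tn beta K u = 0.

Lemma at_most_digits_cons beta K e w : 0 < beta -> at_most_digits beta K w ->
  (0 <= e)%Z -> IZR e + w < beta -> at_most_digits beta (S K) ((IZR e + w) / beta).
Proof.
  intros hb [hw hT] he hl. apply IZR_le in he.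
  assert (E : beta * ((IZR e + w) / beta) = IZR e + w) by (field; lra).
  assert (F : Tb beta ((IZR e + w) / beta) = w).
  { unfold Tb. rewrite E, (floorR_unique e) by lra. ring. }
  split.
  - split.
    + apply (Rmult_le_reg_l beta); lra.
    + apply (Rmult_lt_reg_l beta); lra.
  - rewrite Tn_succ_r, F. exact hT.
Qed.

Lemma at_most_digits_Tb beta K u : at_most_digits beta (S K) u -> at_most_digits beta K (Tb beta u).
Proof. intros [_ h]. split; [apply Tb_range|]. rewrite <- Tn_succ_r. exact h. Qed.

Definition max_below (beta : R) (K : nat) (v p : R) : Prop :=
  at_most_digits beta K p /\ p < v /\
  forall w, at_most_digits beta K w -> w < v -> w <= p.

Lemma max_below_digit beta K v p : 0 < beta -> 0 <= v <= 1 ->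
  max_below beta K (Tb beta v) p ->
  max_below beta (S K) v ((IZR (floorR (beta * v)) + p) / beta).
Proof.
  intros hb hv [Hp [pv pmax]].
  pose proof (Tb_decomp beta v hb) as Dv.
  set (d := floorR (beta * v)) in *.
  assert (d0 : (0 <= d)%Z) by (apply floorR_nonneg; nra).
  assert (Ev : beta * v = IZR d + Tb beta v) by (unfold Tb; fold d; ring).
  split; [|split].
  - apply at_most_digits_cons; auto. nra.
  - rewrite Dv. apply Rdiv_lt_compat_pos; lra.
  - intros w Hw wv.
    pose proof (Tb_decomp beta w hb) as Dw.
    pose proof (at_most_digits_Tb _ _ _ Hw) as HTw.
    assert (ed : (floorR (beta * w) <= d)%Z) by (apply floorR_le; nra).
    rewrite Dw. apply Rdiv_le_compat_pos; auto.
    destruct (Z.eq_dec (floorR (beta * w)) d) as [Ed|Ed].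
    + rewrite Ed. assert (Tb beta w <= p); [|lra].
      apply pmax; auto. unfold Tb. fold d. rewrite Ed. nra.
    + assert (ed' : (floorR (beta * w) + 1 <= d)%Z) by lia.
      apply IZR_le in ed'. rewrite plus_IZR in ed'.
      pose proof (Tb_range beta w). destruct Hp as [[p0 _] _]. lra.
Qed.

(* A last nonzero digit [d] can only be lowered to [d - 1], after which the
   remaining [K] digits are as large as possible below [1]. *)
Lemma max_below_borrow beta K v q : 0 < beta -> 0 <= v <= 1 -> Tb beta v = 0 ->
  (1 <= floorR (beta * v))%Z -> max_below beta K 1 q ->
  max_below beta (S K) v ((IZR (floorR (beta * v) - 1) + q) / beta).
Proof.
  intros hb hv Tv d1 [Hq [q1 qmax]].
  pose proof (Tb_decomp beta v hb) as Dv. rewrite Tv in Dv.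
  set (d := floorR (beta * v)) in *.
  assert (Ev : beta * v = IZR d) by (rewrite Dv at 1; field; lra).
  pose proof (IZR_le _ _ d1) as d1'.
  split; [|split].
  - apply at_most_digits_cons; auto; [lia|].
    rewrite minus_IZR. simpl. nra.
  - rewrite Dv, minus_IZR. apply Rdiv_lt_compat_pos; simpl; lra.
  - intros w Hw wv.
    pose proof (Tb_decomp beta w hb) as Dw.
    pose proof (at_most_digits_Tb _ _ _ Hw) as HTw.
    pose proof (Tb_range beta w) as Tw.
    assert (ed : (floorR (beta * w) < d)%Z).
    { destruct (Z.le_gt_cases d (floorR (beta * w))) as [h|h]; auto.
      exfalso. apply IZR_le in h. pose proof (floorR_spec (beta * w)). nra. }
    assert (ed' : (floorR (beta * w) <= d - 1)%Z) by lia.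
    apply IZR_le in ed'. rewrite minus_IZR in ed'.
    rewrite Dw, minus_IZR. apply Rdiv_le_compat_pos; auto.
    assert (Tb beta w <= q) by (apply qmax; [exact HTw | lra]). simpl in *. lra.
Qed.

Lemma Tn_0 beta i : Tn beta i 0 = 0.
Proof.
  induction i; [reflexivity|].
  change (Tb beta (Tn beta i 0) = 0). rewrite IHi, Tb_floor0; [ring|].
  apply floorR_unique. simpl. lra.
Qed.

Section ParryOrbit.

Variables (beta : R) (m : nat).
Hypothesis beta_gt1 : 1 < beta.
Hypothesis m_pos : (1 <= m)%nat.
Hypothesis orbit_m : Tn beta m 1 = 0.
Hypothesis last_digit1 : renyi_digit beta m = 1%Z.

Lemma orbit_range j : 0 <= Tn beta j 1 <= 1.
Proof.
  destruct j; [simpl; lra|].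
  pose proof (Tb_range beta (Tn beta j 1)). simpl. lra.
Qed.

Lemma orbit_pos j : (j < m)%nat -> 0 < Tn beta j 1.
Proof.
  intros hj. destruct (orbit_range j) as [[h|h] _]; auto. exfalso.
  unfold renyi_digit in last_digit1.
  replace (m - 1)%nat with ((m - 1 - j) + j)%nat in last_digit1 by lia.
  rewrite Tn_add, <- h, Tn_0, Rmult_0_r, (floorR_unique 0) in last_digit1 by (simpl; lra).
  discriminate.
Qed.

(* The index is read modulo [m]: at [j = m - 1] the digit [t_m = 1] must be
   lowered to [0], and what follows is the largest [K]-digit number below
   [1 = T^0(1)]. *)
Lemma max_below_orbit K j : (j < m)%nat ->
  max_below beta K (Tn beta j 1) (Tn beta j 1 - Tn beta ((j + K) mod m) 1 / beta ^ K).
Proof.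
  revert j. induction K as [|K IHK]; intros j hj.
  - rewrite Nat.add_0_r, Nat.mod_small by exact hj.
    replace (Tn beta j 1 - Tn beta j 1 / beta ^ 0) with 0 by (simpl; field).
    pose proof (orbit_pos j hj).
    split; [split; [lra | reflexivity] | split; [lra|]].
    intros w [_ hw] _. simpl in hw. lra.
  - assert (PK : 0 < beta ^ K) by (apply pow_lt; lra).
    destruct (Nat.eq_dec (S j) m) as [Em|Em].
    + assert (Tj : Tb beta (Tn beta j 1) = 0) by (rewrite <- Em in orbit_m; exact orbit_m).
      assert (dj : floorR (beta * Tn beta j 1) = 1%Z).
      { unfold renyi_digit in last_digit1.
        rewrite <- Em, Nat.sub_1_r in last_digit1. exact last_digit1. }
      pose proof (Tb_decomp beta (Tn beta j 1) ltac:(lra)) as Dj.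
      rewrite Tj, dj in Dj.
      assert (Ecyc : ((j + S K) mod m = K mod m)%nat).
      { replace (j + S K)%nat with (K + 1 * m)%nat by lia. apply Nat.Div0.mod_add. }
      replace (Tn beta j 1 - Tn beta ((j + S K) mod m) 1 / beta ^ S K)
        with ((IZR (floorR (beta * Tn beta j 1) - 1) +
               (1 - Tn beta (K mod m) 1 / beta ^ K)) / beta).
      * apply max_below_borrow;
          [lra | apply orbit_range | exact Tj | rewrite dj; lia |].
        exact (IHK 0%nat ltac:(lia)).
      * rewrite Ecyc, dj, Dj. simpl. field. lra.
    + replace (Tn beta j 1 - Tn beta ((j + S K) mod m) 1 / beta ^ S K)
        with ((IZR (floorR (beta * Tn beta j 1)) +
               (Tn beta (S j) 1 - Tn beta ((S j + K) mod m) 1 / beta ^ K)) / beta).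
      * apply max_below_digit; [lra | apply orbit_range |].
        exact (IHK (S j) ltac:(lia)).
      * replace (S j + K)%nat with (j + S K)%nat by lia.
        change (Tn beta (S j) 1) with (Tb beta (Tn beta j 1)). unfold Tb. simpl. field. lra.
Qed.

Lemma max_below_last_digit s K u : 0 <= u < 1 -> Tn beta (S s) u = 0 ->
  floorR (beta * Tn beta s u) <> 0%Z ->
  max_below beta (S s + K) u (u - Tn beta (K mod m) 1 / beta ^ (S s + K)).
Proof.
  assert (PK : 0 < beta ^ K) by (apply pow_lt; lra).
  revert u. induction s as [|s IHs]; intros u hu Tu du.
  - change (Tb beta u = 0) in Tu. change (floorR (beta * u) <> 0%Z) in du.
    pose proof (floorR_nonneg (beta * u) ltac:(nra)).
    pose proof (Tb_decomp beta u ltac:(lra)) as Du. rewrite Tu in Du.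
    replace (u - Tn beta (K mod m) 1 / beta ^ (1 + K))
      with ((IZR (floorR (beta * u) - 1) + (1 - Tn beta (K mod m) 1 / beta ^ K)) / beta).
    + apply max_below_borrow; [lra | lra | exact Tu | lia |].
      exact (max_below_orbit K 0 ltac:(lia)).
    + set (d := floorR (beta * u)) in *.
      rewrite minus_IZR, Du. simpl. field. lra.
  - rewrite Tn_succ_r in Tu, du.
    replace (u - Tn beta (K mod m) 1 / beta ^ (S (S s) + K))
      with ((IZR (floorR (beta * u)) +
             (Tb beta u - Tn beta (K mod m) 1 / beta ^ (S s + K))) / beta).
    + apply max_below_digit; [lra | lra |].
      exact (IHs (Tb beta u) (Tb_range beta u) Tu du).
    + assert (0 < beta ^ (S s + K)) by (apply pow_lt; lra).
      change (beta ^ (S (S s) + K)) with (beta * beta ^ (S s + K)).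
      unfold Tb. field. lra.
Qed.

End ParryOrbit.

Lemma at_most_digits_Zbeta_plus beta N x : 1 < beta ->
  at_most_digits beta N x -> in_Zbeta_plus beta (beta ^ N * x).
Proof.
  intros hb. revert x. induction N as [|N IHN]; intros x [[x0 x1] xT].
  - left. simpl in *. subst. ring.
  - assert (P : 0 < beta ^ N) by (apply pow_lt; lra).
    destruct (Rle_lt_dec 1 (beta * x)) as [H|H].
    + right. exists N. split.
      * assert (0 < beta * beta ^ N) by nra.
        unfold top_pos. simpl. split; nra.
      * replace (beta ^ S N * x / beta ^ S N) with x; [exact xT|].
        field. apply pow_nonzero. lra.
    + assert (Tx : Tb beta x = beta * x).
      { apply Tb_floor0, floorR_unique. simpl. split; nra. }
      replace (beta ^ S N * x) with (beta ^ N * (beta * x)) by (simpl; ring).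
      apply IHN. split; [split; nra|].
      rewrite <- Tx, <- Tn_succ_r. exact xT.
Qed.

(* A positive beta-integer below [beta ^ N] has its leading digit at some
   position [n' < N]; the [N - S n'] leading zeros do not change the tail. *)
Lemma Zbeta_plus_at_most_digits beta N z : 1 < beta ->
  in_Zbeta_plus beta z -> z < beta ^ N -> at_most_digits beta N (z / beta ^ N).
Proof.
  intros hb [Z0 | [n' [[t1 t2] tT]]] hz.
  - subst z. unfold Rdiv. rewrite Rmult_0_l.
    split; [lra | apply Tn_0].
  - assert (Pn : 0 < beta ^ n') by (apply pow_lt; lra).
    assert (PN : 0 < beta ^ N) by (apply pow_lt; lra).
    assert (lt : (n' < N)%nat).
    { destruct (Nat.lt_ge_cases n' N) as [h|h]; auto.
      pose proof (Rle_pow beta N n' ltac:(lra) h). lra. }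
    assert (EN : beta ^ N = beta ^ (N - S n') * beta ^ S n')
      by (rewrite <- pow_add; f_equal; lia).
    assert (PS : 0 < beta ^ S n') by (apply pow_lt; lra).
    assert (Pj : 0 < beta ^ (N - S n')) by (apply pow_lt; lra).
    assert (Ej : beta ^ (N - S n') * (z / beta ^ N) = z / beta ^ S n')
      by (rewrite EN; field; lra).
    split.
    + apply Rdiv_range. lra.
    + replace N with (S n' + (N - S n'))%nat at 1 by lia.
      rewrite Tn_add, (Tn_small beta (N - S n')), Ej; auto.
      * apply (Rmult_le_reg_l (beta ^ N)); auto. field_simplify; lra.
      * rewrite Ej. apply (Rmult_lt_reg_l (beta ^ S n')); auto. field_simplify; lra.
Qed.

Lemma is_pred_of_max_below beta N y p : 1 < beta -> y <= beta ^ N ->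
  max_below beta N (y / beta ^ N) (p / beta ^ N) -> is_pred beta y p.
Proof.
  intros hb hy [Hp [py pmax]].
  assert (PN : 0 < beta ^ N) by (apply pow_lt; lra).
  assert (p0 : 0 <= p).
  { destruct Hp as [[h _] _]. apply (Rmult_le_compat_l (beta ^ N)) in h; [|lra].
    replace (beta ^ N * (p / beta ^ N)) with p in h by (field; lra). lra. }
  split; [|split].
  - left. replace p with (beta ^ N * (p / beta ^ N)) by (field; lra).
    exact (at_most_digits_Zbeta_plus beta N _ hb Hp).
  - apply (Rmult_lt_compat_l (beta ^ N)) in py; [|lra].
    replace (beta ^ N * (p / beta ^ N)) with p in py by (field; lra).
    replace (beta ^ N * (y / beta ^ N)) with y in py by (field; lra). exact py.
  - intros z [Hz | Hz] zy.
    + apply (Rmult_le_reg_r (/ beta ^ N)); [apply Rinv_0_lt_compat; lra|].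
      apply pmax; [apply Zbeta_plus_at_most_digits; auto; lra|].
      apply Rdiv_lt_compat_pos; auto.
    + destruct Hz as [Z0 | [n' [[t1 _] _]]]; [lra|].
      assert (0 < beta ^ n') by (apply pow_lt; lra). lra.
Qed.

Theorem lemma3p21 (beta : R) (m : nat) (y : R) (n k : nat) :
  (2 <= m)%nat ->
  simple_parry_len beta m ->
  renyi_digit beta m = 1%Z ->
  top_pos beta y n ->
  Tn beta (S n) (y / beta ^ (S n)) = 0 ->
  (k <= n)%nat ->
  bdigit beta y n k <> 0%Z ->
  (forall i : nat, (i < k)%nat -> bdigit beta y n i = 0%Z) ->
  is_pred beta y (y - Tn beta (k mod m) 1).
Proof.
  intros _ [hb [hm [hTm _]]] hr [y0 y1] Hint hkn Hyk Hzero.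
  assert (0 < beta ^ n) by (apply pow_lt; lra).
  set (u := y / beta ^ S n) in *.
  assert (hu : 0 <= u < 1) by (apply Rdiv_range; lra).
  assert (Htail : Tn beta (S (n - k)) u = 0).
  { set (w := Tn beta (S (n - k)) u).
    assert (Hw : Tn beta k w = beta ^ k * w).
    { apply Tn_zero_digits. intros t ht.
      unfold w. rewrite <- Tn_add.
      replace (t + S (n - k))%nat with (n - (k - 1 - t))%nat by lia.
      apply Hzero. lia. }
    unfold w in Hw at 1. rewrite <- Tn_add in Hw.
    replace (k + S (n - k))%nat with (S n) in Hw by lia.
    assert (0 < beta ^ k) by (apply pow_lt; lra). nra. }
  pose proof (max_below_last_digit beta m hb hm hTm hr (n - k) k u hu Htail Hyk) as Hmax.
  replace (S (n - k) + k)%nat with (S n) in Hmax by lia.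
  replace (u - Tn beta (k mod m) 1 / beta ^ S n)
    with ((y - Tn beta (k mod m) 1) / beta ^ S n) in Hmax
    by (unfold u; field; apply pow_nonzero; lra).
  exact (is_pred_of_max_below beta (S n) y _ hb (Rlt_le _ _ y1) Hmax).
Qed.
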